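(* Consider a u-MPS with core tensor $\mathcal{A}$ and boundary vectors $\alpha,\omega\in\mathbb{R}^D$ such that $\mathcal{Z}_*:=\sum_{s\in\Sigma^*}(\alpha^T\mathcal{A}(s)\omega)^2$ is finite and positive, and let $P_*(s)=(\alpha^T\mathcal{A}(s)\omega)^2/\mathcal{Z}_*$ be the induced probability distribution on $\Sigma^*$. Let $R$ be an unambiguous regex whose right transfer operator $\mathcal{E}^r_R$ converges, and suppose $P_*(R):=\sum_{s'\in\mathcal{L}(R)}P_*(s')>0$. Then $\mathrm{SAMPLE}(R,\alpha\alpha^T,\omega\omega^T)$ outputs a random string distributed according to the conditional distribution $P_*(s\mid s\in\mathcal{L}(R))$, i.e. with probability $P_*(s)/P_*(R)$ if $s\in\mathcal{L}(R)$ and $0$ otherwise.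
   Context: A u-MPS over a finite alphabet $\Sigma$ of size $d$ consists of a core tensor $\mathcal{A}$ of shape $(D,d,D)$, assigning to each $c\in\Sigma$ a matrix $\mathcal{A}(c)\in\mathbb{R}^{D\times D}$, and boundary vectors $\alpha,\omega\in\mathbb{R}^D$; for $s=s_1\cdots s_n$, $\mathcal{A}(s)=\mathcal{A}(s_1)\cdots\mathcal{A}(s_n)$, $\mathcal{A}(\varepsilon)=I$. Regex are syntax trees built from characters $c\in\Sigma$, concatenations $R_1R_2$, unions $R_1|R_2$, Kleene closures $S^*$; $\mathcal{L}(R)$ is the set of strings matching $R$. Match counts: $|s|_c=1$ if $s=c$, else $0$; $|s|_{R_1R_2}=\sum_{s_1s_2=s}|s_1|_{R_1}|s_2|_{R_2}$; $|s|_{R_1|R_2}=|s|_{R_1}+|s|_{R_2}$; $|s|_{S^*}=\sum_{n\ge0}\sum_{s_1\cdots s_n=s}\prod_i|s_i|_S$ (the $n=0$ term being $1$ iff $s=\varepsilon$). $R$ is unambiguous if $|s|_R\in\{0,1\}$ for all $s$ (so $\mathcal{L}(R)=\{s:|s|_R=1\}$). Generalized transfer operators: $\mathcal{E}^r_c(Q)=\mathcal{A}(c)Q\mathcal{A}(c)^T$, $\mathcal{E}^\ell_c(Q)=\mathcal{A}(c)^TQ\mathcal{A}(c)$; $\mathcal{E}^r_{R_1R_2}=\mathcal{E}^r_{R_1}\circ\mathcal{E}^r_{R_2}$, $\mathcal{E}^\ell_{R_1R_2}=\mathcal{E}^\ell_{R_2}\circ\mathcal{E}^\ell_{R_1}$;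 unions give sums; $\mathcal{E}^r_{S^*}=\sum_{n\ge0}(\mathcal{E}^r_S)^{\circ n}$, $\mathcal{E}^\ell_{S^*}=\sum_{n\ge0}(\mathcal{E}^\ell_S)^{\circ n}$. A literal string $s$ is treated as the concatenation of its characters, so $\mathcal{E}^\ell_s(Q)=\mathcal{A}(s)^TQ\mathcal{A}(s)$. $\mathcal{E}^r_R$ converges if all Kleene-closure series in its recursive definition converge. $\mathcal{Z}_R(Q_\ell,Q_r)=\mathrm{Tr}(Q_\ell\mathcal{E}^r_R(Q_r))$. The randomized procedure $\mathrm{SAMPLE}(R,Q_\ell,Q_r)$ is defined recursively: (i) if $R=c$, return $c$; (ii) if $R=R_1R_2$, let $s_1=\mathrm{SAMPLE}(R_1,Q_\ell,\mathcal{E}^r_{R_2}(Q_r))$, then $s_2=\mathrm{SAMPLE}(R_2,\mathcal{E}^\ell_{s_1}(Q_\ell),Q_r)$, return $s_1s_2$; (iii) if $R=R_1|R_2$, choose $i\in\{1,2\}$ with probability $\mathcal{Z}_{R_i}(Q_\ell,Q_r)/\mathcal{Z}_{R_1|R_2}(Q_\ell,Q_r)$ and return $\mathrm{SAMPLE}(R_i,Q_\ell,Q_r)$; (iv) if $R=S^*$, with probability $\mathrm{Tr}(Q_\ell Q_r)/\mathcal{Z}_{S^*}(Q_\ell,Q_r)$ return $\varepsilon$, otherwise return $\mathrm{SAMPLE}(SS^*,Q_\ell,Q_r)$. All random choices are independent, and normalization constants encountered are assumed positive. *)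

From mathcomp Require Import ssreflect ssrfun ssrbool eqtype ssrnat seq choice fintype bigop.
From Stdlib Require Import Reals ClassicalEpsilon.

Set Implicit Arguments.
Unset Strict Implicit.
Unset Printing Implicit Defensive.

Definition vec (D : nat) := 'I_D -> R.
Definition mat (D : nat) := 'I_D -> 'I_D -> R.

Definition rsum (D : nat) (f : 'I_D -> R) : R := \big[Rplus/0%R]_(i < D) f i.

Definition mmul (D : nat) (A B : mat D) : mat D :=
  fun i j => rsum (fun k => (A i k * B k j)%R).
Definition madd (D : nat) (A B : mat D) : mat D := fun i j => (A i j + B i j)%R.
Definition mtr (D : nat) (A : mat D) : mat D := fun i j => A j i.
Definition mid (D : nat) : mat D := fun i j => if i == j then 1%R else 0%R.
Definition trace (D : nat) (A : mat D) : R := rsum (fun i => A i i).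
Definition outer (D : nat) (v : vec D) : mat D := fun i j => (v i * v j)%R.

Definition mps_word (Sigma : finType) (D : nat) (A : Sigma -> mat D) (s : seq Sigma)
  : mat D := foldr (fun c M => mmul (A c) M) (@mid D) s.

Definition amp (Sigma : finType) (D : nat) (A : Sigma -> mat D) (alpha omega : vec D)
  (s : seq Sigma) : R :=
  rsum (fun i => rsum (fun j => (alpha i * mps_word A s i j * omega j)%R)).

Definition words (Sigma : finType) (n : nat) : seq (seq Sigma) :=
  iter n (fun L => [seq c :: w | c <- enum Sigma, w <- L]) [:: [::]].

Inductive regex (Sigma : Type) : Type :=
| Chr of Sigma
| Cat of regex Sigma & regex Sigma
| Alt of regex Sigma & regex Sigma
| Star of regex Sigma.

(* all decompositions s = s_1 ... s_n into n (possibly empty) pieces *)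
Fixpoint splits (Sigma : Type) (n : nat) (s : seq Sigma) : seq (seq (seq Sigma)) :=
  match n with
  | 0 => if s is [::] then [:: [::]] else [::]
  | n'.+1 => [seq take i s :: ws | i <- iota 0 (size s).+1, ws <- splits n' (drop i s)]
  end.

(* Truncated match counts: identical to |s|_R except that every Kleene-closure
   sum over n >= 0 is truncated to n <= N.  These are nondecreasing in N and
   |s|_R (in N u {oo}) is their supremum over N. *)
Fixpoint cnt (Sigma : eqType) (N : nat) (r : regex Sigma) (s : seq Sigma) : nat :=
  match r with
  | Chr c => nat_of_bool (s == [:: c])
  | Cat r1 r2 => \sum_(i < (size s).+1) (cnt N r1 (take i s) * cnt N r2 (drop i s))
  | Alt r1 r2 => cnt N r1 s + cnt N r2 s
  | Star r1 => \sum_(n < N.+1) \sum_(ws <- splits n s) \prod_(w <- ws) cnt N r1 w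
  end.

(* R unambiguous : |s|_R in {0,1} for all s, i.e. sup_N cnt N R s <= 1 *)
Definition unambiguous (Sigma : eqType) (r : regex Sigma) : Prop :=
  forall N s, cnt N r s <= 1.

Definition inL (Sigma : eqType) (r : regex Sigma) (s : seq Sigma) : Prop :=
  exists N, 0 < cnt N r s.

(* classical limit of a real sequence (meaningful when it converges) *)
Definition lim (u : nat -> R) : R := epsilon (inhabits 0%R) (fun l => Un_cv u l).

Definition star_partial (D : nat) (T : mat D -> mat D) (Q : mat D) (i j : 'I_D)
  : nat -> R := fun n => sum_f_R0 (fun k => iter k T Q i j) n.

Fixpoint Er (Sigma : Type) (D : nat) (A : Sigma -> mat D) (r : regex Sigma)
  : mat D -> mat D :=
  match r with
  | Chr c => fun Q => mmul (mmul (A c) Q) (mtr (A c))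
  | Cat r1 r2 => fun Q => Er A r1 (Er A r2 Q)
  | Alt r1 r2 => fun Q => madd (Er A r1 Q) (Er A r2 Q)
  | Star r1 => fun Q i j => lim (star_partial (Er A r1) Q i j)
  end.

(* E^r_R converges: every Kleene-closure series sum_n (E^r_S)^n converges
   (entrywise, for every argument Q; equivalent to operator convergence in
   finite dimension). *)
Fixpoint Er_conv (Sigma : Type) (D : nat) (A : Sigma -> mat D) (r : regex Sigma) : Prop :=
  match r with
  | Chr _ => True
  | Cat r1 r2 => Er_conv A r1 /\ Er_conv A r2
  | Alt r1 r2 => Er_conv A r1 /\ Er_conv A r2
  | Star r1 => Er_conv A r1 /\
      forall (Q : mat D) (i j : 'I_D), exists l, Un_cv (star_partial (Er A r1) Q i j) l
  end.

Definition El_word (Sigma : finType) (D : nat) (A : Sigma -> mat D) (s : seq Sigma)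
  (Q : mat D) : mat D := mmul (mmul (mtr (mps_word A s)) Q) (mps_word A s).

Definition ZR (Sigma : Type) (D : nat) (A : Sigma -> mat D) (r : regex Sigma)
  (Ql Qr : mat D) : R := trace (mmul Ql (Er A r Qr)).

(* samp k R Ql Qr s = probability that SAMPLE(R,Ql,Qr) outputs s along an
   execution in which each chain of Kleene-closure unfoldings has length <= k.
   The probability that SAMPLE(R,Ql,Qr) outputs s is the limit as k -> oo. *)
Fixpoint samp (Sigma : finType) (D : nat) (A : Sigma -> mat D) (k : nat)
  : regex Sigma -> mat D -> mat D -> seq Sigma -> R :=
  fix sr (r : regex Sigma) (Ql Qr : mat D) (s : seq Sigma) {struct r} : R :=
  match r with
  | Chr c => if s == [:: c] then 1%R else 0%R
  | Cat r1 r2 =>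
      \big[Rplus/0%R]_(i < (size s).+1)
        (sr r1 Ql (Er A r2 Qr) (take i s)
         * sr r2 (El_word A (take i s) Ql) Qr (drop i s))%R
  | Alt r1 r2 =>
      (ZR A r1 Ql Qr / ZR A r Ql Qr * sr r1 Ql Qr s
       + ZR A r2 Ql Qr / ZR A r Ql Qr * sr r2 Ql Qr s)%R
  | Star r1 =>
      match k with
      | 0 => 0%R
      | k'.+1 =>
          let pe := (trace (mmul Ql Qr) / ZR A r Ql Qr)%R in
          (pe * (if s is [::] then 1 else 0)
           + (1 - pe) *
             \big[Rplus/0%R]_(i < (size s).+1)
               (sr r1 Ql (Er A r Qr) (take i s)
                * samp A k' r (El_word A (take i s) Ql) Qr (drop i s)))%R
      end
  end.

Definition len_mass (Sigma : finType) (P : seq Sigma -> Prop) (f : seq Sigma -> R)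
  (n : nat) : R :=
  \big[Rplus/0%R]_(w <- words Sigma n)
    (if excluded_middle_informative (P w) then f w else 0%R).

From HB Require Import structures.
From mathcomp Require Import ssreflect ssrfun ssrbool eqtype ssrnat seq choice fintype bigop.
From Stdlib Require Import Reals ClassicalEpsilon Lra FunctionalExtensionality.

Set Implicit Arguments.
Unset Strict Implicit.
Unset Printing Implicit Defensive.

(* Write Z_R(v, Q) := v^T E^r_R(Q) v and let dcnt k R s count the matches of s
   against R in which every chain of unfoldings of a Kleene closure has length at
   most k.  By induction on R,
     Z_R(v, Q) * P[SAMPLE_k(R, v v^T, Q) = s] = dcnt k R s * Tr(E^l_s(v v^T) Q):
   every branching probability of SAMPLE is a ratio of values of Z, and these
   ratios telescope along the recursion defining E^r (for a closure, through the
   fixed point E^r_{S*} = id + E^r_S o E^r_{S*}).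
   Moreover Z_R(v, Q) is the supremum of the sums of dcnt k R s * Tr(E^l_s(v v^T) Q)
   over the words s shorter than L: these sums are bounded by Z_R and approximate
   it along the partial sums of the Kleene series.  For unambiguous R, dcnt k R s
   is eventually the indicator of L(R), hence Z_R(alpha alpha^T, omega omega^T)
   = sum_{s in L(R)} (alpha^T A(s) omega)^2 = Z_* P_*(R), and the output
   probability of SAMPLE converges to P_*(s) / P_*(R). *)

Local Open Scope R_scope.

Lemma RplusA : associative Rplus.
Proof. by move=> x y z; rewrite Rplus_assoc. Qed.

HB.instance Definition _ := Monoid.isComLaw.Build R 0 Rplus RplusA Rplus_comm Rplus_0_l.
HB.instance Definition _ := Monoid.isMulLaw.Build R 0 Rmult Rmult_0_l Rmult_0_r.
HB.instance Definition _ :=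
  Monoid.isAddLaw.Build R Rmult Rplus Rmult_plus_distr_r Rmult_plus_distr_l.

Lemma sumR_ge0 (I : Type) (r : seq I) (P : pred I) (F : I -> R) :
  (forall i, P i -> 0 <= F i) -> 0 <= \big[Rplus/0]_(i <- r | P i) F i.
Proof. by move=> F_ge0; apply: big_ind => //; [lra | move=> x y; lra]. Qed.

Lemma sumR_le (I : Type) (r : seq I) (P : pred I) (F G : I -> R) :
  (forall i, P i -> F i <= G i) ->
  \big[Rplus/0]_(i <- r | P i) F i <= \big[Rplus/0]_(i <- r | P i) G i.
Proof. by move=> FG; apply: big_ind2 => //; [lra | move=> *; lra]. Qed.

Lemma sumR_le_seq (I : eqType) (r : seq I) (F G : I -> R) :
  (forall i, i \in r -> F i <= G i) ->
  \big[Rplus/0]_(i <- r) F i <= \big[Rplus/0]_(i <- r) G i.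
Proof.
by move=> FG; rewrite big_seq [X in _ <= X]big_seq; apply: sumR_le.
Qed.

Lemma sumR_nat_widen (F : nat -> R) (m n : nat) : (m <= n)%nat -> (forall i, 0 <= F i) ->
  \big[Rplus/0]_(0 <= i < m) F i <= \big[Rplus/0]_(0 <= i < n) F i.
Proof.
move=> le_mn F_ge0; rewrite [X in _ <= X](big_cat_nat _ (n := m)) //=.
have := @sumR_ge0 _ (index_iota m n) xpredT F (fun i _ => F_ge0 i); lra.
Qed.

Lemma sumR_term (I : eqType) (r : seq I) (F : I -> R) x :
  x \in r -> (forall i, 0 <= F i) -> F x <= \big[Rplus/0]_(i <- r) F i.
Proof.
move=> xr F_ge0; rewrite (big_rem x xr) /=.
have := @sumR_ge0 _ (rem x r) xpredT F (fun i _ => F_ge0 i); lra.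
Qed.

Lemma INR_sum (I : Type) (r : seq I) (P : pred I) (f : I -> nat) :
  INR (\sum_(i <- r | P i) f i) = \big[Rplus/0]_(i <- r | P i) INR (f i).
Proof. by apply: big_morph => // m n; rewrite plus_INR. Qed.

Lemma Un_cv_const c : Un_cv (fun _ => c) c.
Proof. by move=> e e_gt0; exists 0%nat => n _; rewrite /R_dist Rminus_diag Rabs_R0. Qed.

Lemma Un_cv_ext (u v : nat -> R) l : (forall n, u n = v n) -> Un_cv u l -> Un_cv v l.
Proof. by move=> uv cv e /cv [N HN]; exists N => n /HN; rewrite uv. Qed.

Lemma lim_Un_cv u l : Un_cv u l -> lim u = l.
Proof.
move=> cvl; apply: (UL_sequence _ _ _ _ cvl); rewrite /lim.
by apply: epsilon_spec; exists l.
Qed.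

Lemma sumR_Un_cv (I : Type) (r : seq I) (u : I -> nat -> R) (l : I -> R) :
  (forall i, Un_cv (u i) (l i)) ->
  Un_cv (fun n => \big[Rplus/0]_(i <- r) u i n) (\big[Rplus/0]_(i <- r) l i).
Proof.
move=> cv; elim: r => [|a r IH].
  by rewrite big_nil; apply: (Un_cv_ext _ (Un_cv_const 0)) => n; rewrite big_nil.
by rewrite big_cons; apply: (Un_cv_ext _ (CV_plus _ _ _ _ (cv a) IH)) => n; rewrite big_cons.
Qed.

Lemma growing_Un_cv_sup u l : Un_growing u -> (forall n, u n <= l) ->
  (forall eps, 0 < eps -> exists n, l - eps <= u n) -> Un_cv u l.
Proof.
move=> grow le_l approx eps eps_gt0; have [N le_N] := approx (eps / 2) ltac:(lra).
exists N => n le_Nn; have := growing_prop u n N grow le_Nn; have := le_l n.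
by rewrite /R_dist => ? ?; rewrite Rabs_left1; lra.
Qed.

Lemma Un_cv_eventually (u : nat -> R) l :
  (exists K, forall k, (K <= k)%nat -> u k = l) -> Un_cv u l.
Proof.
case=> K u_eq eps eps_gt0; exists K => n /leP le_Kn.
by rewrite /R_dist u_eq // Rminus_diag Rabs_R0.
Qed.

Lemma sum_f_R0_big (u : nat -> R) N : sum_f_R0 u N = \big[Rplus/0]_(0 <= n < N.+1) u n.
Proof. by elim: N => [|N IH]; rewrite ?big_nat1 // big_nat_recr //= IH. Qed.

Lemma exists_small_factor M e : 0 <= M -> 0 < e -> exists2 d, 0 < d & d * M <= e.
Proof.
move=> M_ge0 e_gt0; have d_gt0 : 0 < e / (M + 1) by apply: Rdiv_lt_0_compat; lra.
exists (e / (M + 1)) => //.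
have : e / (M + 1) * (M + 1) = e by field; lra.
nra.
Qed.

Section Matrices.

Variable D : nat.
Implicit Types (M N P Q : mat D) (v x : vec D).

Definition mzero : mat D := fun _ _ => 0.
Definition mscale (c : R) M : mat D := fun i j => c * M i j.

Lemma mat_ext M N : (forall i j, M i j = N i j) -> M = N.
Proof. by move=> MN; do 2![apply: functional_extensionality => ?]; apply: MN. Qed.

Lemma mmulA M N P : mmul (mmul M N) P = mmul M (mmul N P).
Proof.
apply: mat_ext => i j; rewrite /mmul /rsum.
under eq_bigr do rewrite big_distrl.
under [RHS]eq_bigr do rewrite big_distrr.
by rewrite exchange_big; do 2!apply: eq_bigr => ? _; rewrite /= Rmult_assoc.
Qed.

Lemma mmul1m M : mmul (@mid D) M = M.
Proof.
apply: mat_ext => i j; rewrite /mmul /mid /rsum (bigD1 i) //= eqxx big1 => [|k /negbTE].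
  by rewrite Rmult_1_l Rplus_0_r.
by rewrite eq_sym => ->; rewrite Rmult_0_l.
Qed.

Lemma mmulm1 M : mmul M (@mid D) = M.
Proof.
apply: mat_ext => i j; rewrite /mmul /mid /rsum (bigD1 j) //= eqxx big1 => [|k /negbTE ->].
  by rewrite Rmult_1_r Rplus_0_r.
by rewrite Rmult_0_r.
Qed.

Lemma mmulDr M P Q : mmul M (madd P Q) = madd (mmul M P) (mmul M Q).
Proof.
by apply: mat_ext => i j; rewrite /mmul /madd /rsum -big_split; apply: eq_bigr => ? _ /=; ring.
Qed.

Lemma mmulDl M P Q : mmul (madd P Q) M = madd (mmul P M) (mmul Q M).
Proof.
by apply: mat_ext => i j; rewrite /mmul /madd /rsum -big_split; apply: eq_bigr => ? _ /=; ring.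
Qed.

Lemma mmulZr M Q c : mmul M (mscale c Q) = mscale c (mmul M Q).
Proof.
by apply: mat_ext => i j; rewrite /mmul /mscale /rsum big_distrr; apply: eq_bigr => ? _ /=; ring.
Qed.

Lemma mmulZl M Q c : mmul (mscale c Q) M = mscale c (mmul Q M).
Proof.
by apply: mat_ext => i j; rewrite /mmul /mscale /rsum big_distrr; apply: eq_bigr => ? _ /=; ring.
Qed.

Definition vmul x M : vec D := fun j => rsum (fun i => x i * M i j).

Lemma vmul1 x : vmul x (@mid D) = x.
Proof.
apply: functional_extensionality => j; rewrite /vmul /mid /rsum (bigD1 j) //= eqxx.
by rewrite big1 => [|i /negbTE ->]; rewrite ?Rmult_1_r ?Rplus_0_r ?Rmult_0_r.
Qed.

Lemma vmul_mmul x M N : vmul x (mmul M N) = vmul (vmul x M) N.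
Proof.
apply: functional_extensionality => j; rewrite /vmul /mmul /rsum.
under eq_bigr do rewrite big_distrr.
under [RHS]eq_bigr do rewrite big_distrl.
by rewrite exchange_big; do 2!apply: eq_bigr => ? _; rewrite /= Rmult_assoc.
Qed.

Definition qform x M : R := rsum (fun i => rsum (fun j => x i * M i j * x j)).

Definition psd M : Prop := forall x, 0 <= qform x M.

Lemma qformD x M N : qform x (madd M N) = qform x M + qform x N.
Proof.
rewrite /qform /madd /rsum -big_split; apply: eq_bigr => i _.
by rewrite -big_split; apply: eq_bigr => ? _ /=; ring.
Qed.

Lemma qform_conj x B Q : qform x (mmul (mmul B Q) (mtr B)) = qform (vmul x B) Q.
Proof.
rewrite /qform /vmul /mmul /mtr /rsum.
pose F i j k l := x i * B i k * Q k l * B j l * x j.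
transitivity (\big[Rplus/0]_i \big[Rplus/0]_j \big[Rplus/0]_l \big[Rplus/0]_k F i j k l).
  apply: eq_bigr => i _; apply: eq_bigr => j _; rewrite big_distrr big_distrl /=.
  apply: eq_bigr => l _; rewrite big_distrl big_distrr big_distrl /=.
  by apply: eq_bigr => k _; rewrite /F; ring.
under eq_bigr => i _ do under eq_bigr => j _ do rewrite exchange_big.
under eq_bigr => i _ do rewrite exchange_big.
rewrite exchange_big; apply: eq_bigr => k _.
under eq_bigr => i _ do rewrite exchange_big.
rewrite exchange_big; apply: eq_bigr => l _.
rewrite big_distrl big_distrl; apply: eq_bigr => i _ /=.
by rewrite big_distrr; apply: eq_bigr => j _ /=; rewrite /F; ring.
Qed.

Lemma trace_mmul_outer v M : trace (mmul (outer v) M) = qform v M.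
Proof.
rewrite /trace /mmul /outer /qform /rsum exchange_big.
by do 2!apply: eq_bigr => ? _ /=; ring.
Qed.

Lemma qform_outer x w : qform x (outer w) = rsum (fun i => x i * w i) ^ 2.
Proof.
rewrite /qform /outer /= Rmult_1_r /rsum big_distrl; apply: eq_bigr => i _.
by rewrite big_distrr; apply: eq_bigr => ? _ /=; ring.
Qed.

Lemma psd_outer w : psd (outer w).
Proof. by move=> x; rewrite qform_outer; apply: pow2_ge_0. Qed.

End Matrices.

Section LinearMaps.

Variable D : nat.
Implicit Types (M P Q : mat D).

Definition mlinear (f : mat D -> mat D) : Prop :=
  (forall P Q, f (madd P Q) = madd (f P) (f Q)) /\
  (forall c Q, f (mscale c Q) = mscale c (f Q)).

Definition munit (a b : 'I_D) : mat D := fun i j => if (i == a) && (j == b) then 1 else 0.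

Lemma mlinear_entry f M i j : mlinear f ->
  f M i j = rsum (fun a => rsum (fun b => M a b * f (munit a b) i j)).
Proof.
move=> [fD fZ]; pose msum (F : 'I_D -> mat D) := \big[@madd D/@mzero D]_a F a.
have msum_entry F k l : msum F k l = rsum (fun a => F a k l).
  by apply: (big_morph (fun N : mat D => N k l) (id1 := 0) (op1 := Rplus)).
have f0 : f (@mzero D) = @mzero D.
  have -> : @mzero D = mscale 0 (@mzero D) by apply: mat_ext => ? ?; rewrite /mscale Rmult_0_l.
  by rewrite fZ; apply: mat_ext => ? ?; rewrite /mscale !Rmult_0_l.
have f_msum F : f (msum F) = msum (fun a => f (F a)).
  by apply: (big_morph f (id1 := @mzero D) (op1 := @madd D)).
have decM : M = msum (fun a => msum (fun b => mscale (M a b) (munit a b))).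
  apply: mat_ext => k l; rewrite msum_entry /rsum (bigD1 k) //= big1 => [|a /negbTE nka].
    rewrite msum_entry /rsum (bigD1 l) //= big1 => [|b /negbTE nlb].
      by rewrite /mscale /munit !eqxx /=; ring.
    by rewrite /mscale /munit eqxx eq_sym nlb /=; ring.
  by rewrite msum_entry /rsum big1 // => b _; rewrite /mscale /munit eq_sym nka /=; ring.
rewrite {1}decM f_msum msum_entry; apply: eq_bigr => a _.
by rewrite f_msum msum_entry; apply: eq_bigr => b _; rewrite fZ.
Qed.

Lemma mlinear_cv f (M : nat -> mat D) L : mlinear f ->
  (forall i j, Un_cv (fun n => M n i j) (L i j)) ->
  forall i j, Un_cv (fun n => f (M n) i j) (f L i j).
Proof.
move=> lin cvM i j; rewrite (mlinear_entry L i j lin).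
apply: (Un_cv_ext (fun n => esym (mlinear_entry (M n) i j lin))).
apply: sumR_Un_cv => a; apply: sumR_Un_cv => b.
exact: CV_mult (cvM a b) (Un_cv_const _).
Qed.

Lemma qform_cv x (M : nat -> mat D) L :
  (forall i j, Un_cv (fun n => M n i j) (L i j)) -> Un_cv (fun n => qform x (M n)) (qform x L).
Proof.
move=> cvM; apply: sumR_Un_cv => i; apply: sumR_Un_cv => j.
have -> : x i * L i j * x j = x i * x j * L i j by ring.
apply: (Un_cv_ext _ (CV_mult _ _ _ _ (Un_cv_const (x i * x j)) (cvM i j))) => n; ring.
Qed.

Definition star_sum (E : mat D -> mat D) Q (n : nat) : mat D :=
  fun i j => star_partial E Q i j n.

Lemma star_sumS E Q n : mlinear E -> star_sum E Q n.+1 = madd Q (E (star_sum E Q n)).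
Proof.
move=> [ED _]; elim: n => [|n IH] //.
have split_last m : star_sum E Q m.+1 = madd (star_sum E Q m) (iter m.+1 E Q) by [].
rewrite split_last {1}IH split_last ED; apply: mat_ext => i j; rewrite /madd /=; ring.
Qed.

Lemma qform_star_sum E Q x n :
  qform x (star_sum E Q n) = sum_f_R0 (fun k => qform x (iter k E Q)) n.
Proof.
elim: n => [|n IH] //=.
have -> : star_sum E Q n.+1 = madd (star_sum E Q n) (iter n.+1 E Q) by [].
by rewrite qformD IH; reflexivity.
Qed.

Lemma psd_star_sum E Q n : (forall P, psd P -> psd (E P)) -> psd Q -> psd (star_sum E Q n).
Proof.
move=> Epsd Qpsd x; rewrite qform_star_sum; apply: cond_pos_sum => k.
by elim: k x => [|k IH] /=; [apply: Qpsd | apply: Epsd].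
Qed.

Lemma mlinear_star_sum E n : mlinear E -> mlinear (star_sum E ^~ n).
Proof.
move=> lin; have [ED EZ] := lin; elim: n => [|n [IHD IHZ]] //.
split=> [P Q|c Q]; rewrite !star_sumS // ?IHD ?IHZ ?ED ?EZ.
  by apply: mat_ext => i j; rewrite /madd /=; ring.
by apply: mat_ext => i j; rewrite /madd /mscale /=; ring.
Qed.

End LinearMaps.

Section TransferOperators.

Variables (Sigma : Type) (D : nat) (A : Sigma -> mat D).
Implicit Types (r : regex Sigma) (Q : mat D).

Lemma Er_star_cv r Q i j : Er_conv A (Star r) ->
  Un_cv (fun n => star_sum (Er A r) Q n i j) (Er A (Star r) Q i j).
Proof. by case=> _ /(_ Q i j) [l cvl] /=; rewrite (lim_Un_cv cvl). Qed.

Lemma Er_linear r : Er_conv A r -> mlinear (Er A r).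
Proof.
elim: r => [c|r1 IH1 r2 IH2|r1 IH1 r2 IH2|r1 IH1] /=.
- by move=> _; split=> *; rewrite ?mmulDr ?mmulDl ?mmulZr ?mmulZl.
- by case=> /IH1 [D1 Z1] /IH2 [D2 Z2]; split=> *; rewrite ?D2 ?D1 ?Z2 ?Z1.
- case=> /IH1 [D1 Z1] /IH2 [D2 Z2]; split=> *; apply: mat_ext => i j.
    by rewrite D1 D2 /madd; ring.
  by rewrite Z1 Z2 /madd /mscale; ring.
- move=> cv; have lin n := mlinear_star_sum n (IH1 (proj1 cv)).
  split=> [P Q|c Q]; apply: mat_ext => i j; apply: lim_Un_cv.
    apply: (Un_cv_ext _ (CV_plus _ _ _ _ (Er_star_cv P i j cv) (Er_star_cv Q i j cv))) => n.
    by rewrite -/(star_sum _ _ n i j) (proj1 (lin n)).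
  apply: (Un_cv_ext _ (CV_mult _ _ _ _ (Un_cv_const c) (Er_star_cv Q i j cv))) => n.
  by rewrite -/(star_sum _ _ n i j) (proj2 (lin n)).
Qed.

Lemma Er_star_fix r Q : Er_conv A (Star r) ->
  Er A (Star r) Q = madd Q (Er A r (Er A (Star r) Q)).
Proof.
move=> cv; have lin := Er_linear (proj1 cv).
apply: mat_ext => i j; apply: (UL_sequence (fun n => star_sum (Er A r) Q n.+1 i j)).
  by apply: (Un_cv_ext _ (CV_shift' _ 1 _ (Er_star_cv Q i j cv))) => n; rewrite Nat.add_1_r.
apply: (Un_cv_ext _ (CV_plus _ _ _ _ (Un_cv_const (Q i j))
  (mlinear_cv lin (fun a b => Er_star_cv Q a b cv) i j))) => n.
by rewrite star_sumS.
Qed.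

Lemma Er_psd r Q : Er_conv A r -> psd Q -> psd (Er A r Q).
Proof.
elim: r Q => [c|r1 IH1 r2 IH2|r1 IH1 r2 IH2|r1 IH1] Q.
- by move=> _ Qpsd x; rewrite qform_conj.
- by case=> cv1 cv2 Qpsd; apply: IH1 => //; apply: IH2.
- case=> cv1 cv2 Qpsd x /=; rewrite qformD.
  by have := IH1 _ cv1 Qpsd x; have := IH2 _ cv2 Qpsd x; lra.
- move=> cv Qpsd x.
  apply: (Rle_cv_lim _ (Un_cv_const 0) (qform_cv x (fun i j => Er_star_cv Q i j cv))).
  by move=> n; apply: psd_star_sum => // P; apply: IH1 (proj1 cv).
Qed.

End TransferOperators.

Section WordWeights.

Variables (Sigma : finType) (D : nat) (A : Sigma -> mat D).

Lemma mps_word_cat s1 s2 :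
  mps_word A (s1 ++ s2) = mmul (mps_word A s1) (mps_word A s2).
Proof. by elim: s1 => [|c s1 IH] /=; rewrite ?mmul1m ?IH ?mmulA. Qed.

(* Tr(E^l_s(v v^T) Q) in the notation of the paper. *)
Definition word_weight (v : vec D) (Q : mat D) (s : seq Sigma) : R :=
  qform (vmul v (mps_word A s)) Q.

Lemma word_weight_cat v Q s1 s2 :
  word_weight v Q (s1 ++ s2) = word_weight (vmul v (mps_word A s1)) Q s2.
Proof. by rewrite /word_weight mps_word_cat vmul_mmul. Qed.

Lemma word_weight_nil v Q : word_weight v Q [::] = qform v Q.
Proof. by rewrite /word_weight vmul1. Qed.

Lemma word_weight_chr v Q c : word_weight v Q [:: c] = qform v (Er A (Chr c) Q).
Proof. by rewrite /word_weight /= mmulm1 qform_conj. Qed.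

Lemma El_word_outer s v : El_word A s (outer v) = outer (vmul v (mps_word A s)).
Proof.
apply: mat_ext => i j; rewrite /El_word /outer /mmul /vmul /mtr /rsum [RHS]big_distrl.
under [RHS]eq_bigr => k _ do rewrite big_distrr.
rewrite [RHS]exchange_big; apply: eq_bigr => l _ /=.
by rewrite big_distrl; apply: eq_bigr => k _ /=; ring.
Qed.

Lemma word_weight_outer alpha omega s :
  word_weight alpha (outer omega) s = amp A alpha omega s ^ 2.
Proof.
rewrite /word_weight qform_outer /amp /vmul /rsum exchange_big; congr (_ ^ 2).
by apply: eq_bigr => j _; rewrite big_distrl; apply: eq_bigr => i _ /=; ring.
Qed.

End WordWeights.

Section Counting.

Variable Sigma : eqType.
Implicit Types (r : regex Sigma) (s : seq Sigma) (g : seq Sigma -> nat).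

Local Open Scope nat_scope.

Definition catcnt g1 g2 s : nat :=
  \sum_(i < (size s).+1) g1 (take i s) * g2 (drop i s).

Fixpoint star_cnt (g : nat -> seq Sigma -> nat) (k : nat) s : nat :=
  if k is k'.+1 then (s == [::]) + catcnt (g k) (star_cnt g k') s else 0.

(* The counterpart of [samp k]: chains of unfoldings of a Kleene closure have
   length at most k. *)
Fixpoint dcnt (k : nat) r : seq Sigma -> nat :=
  match r with
  | Chr c => fun s => s == [:: c]
  | Cat r1 r2 => catcnt (dcnt k r1) (dcnt k r2)
  | Alt r1 r2 => fun s => dcnt k r1 s + dcnt k r2 s
  | Star r1 => star_cnt (dcnt ^~ r1) k
  end.

Lemma catcnt_mono g1 g2 g1' g2' s :
  (forall s, g1 s <= g1' s) -> (forall s, g2 s <= g2' s) ->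
  catcnt g1 g2 s <= catcnt g1' g2' s.
Proof. by move=> le1 le2; apply: leq_sum => i _; apply: leq_mul. Qed.

Lemma catcnt_sumr (I : Type) (t : seq I) g (h : I -> seq Sigma -> nat) s :
  catcnt g (fun w => \sum_(n <- t) h n w) s = \sum_(n <- t) catcnt g (h n) s.
Proof.
rewrite /catcnt exchange_big; apply: eq_bigr => i _; exact: big_distrr.
Qed.

Lemma star_cnt_mono1 (g : nat -> seq Sigma -> nat) k s :
  (forall j s, g j s <= g j.+1 s) -> star_cnt g k s <= star_cnt g k.+1 s.
Proof.
move=> g_mono; elim: k s => [//|k IH] s /=.
by rewrite leq_add2l; apply: catcnt_mono.
Qed.

Lemma dcnt_mono1 k r s : dcnt k r s <= dcnt k.+1 r s.
Proof.
elim: r k s => [c|r1 IH1 r2 IH2|r1 IH1 r2 IH2|r1 IH1] k s //=.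
- exact: catcnt_mono.
- exact: leq_add.
- exact: star_cnt_mono1.
Qed.

Lemma dcnt_mono k k' r s : k <= k' -> dcnt k r s <= dcnt k' r s.
Proof.
move: k k'; apply: (homo_leq (f := fun k => dcnt k r s) (r := leq)) => //.
- exact: leq_trans.
- by move=> k; apply: dcnt_mono1.
Qed.

Definition splits_cnt g n s : nat := \sum_(ws <- splits n s) \prod_(w <- ws) g w.

Lemma splits_cnt0 g s : splits_cnt g 0 s = (s == [::]).
Proof. by case: s => [|c s]; rewrite /splits_cnt /= ?big_cons ?big_nil. Qed.

Lemma splits_cntS g n s : splits_cnt g n.+1 s = catcnt g (splits_cnt g n) s.
Proof.
rewrite /splits_cnt; have -> : splits n.+1 s =
  [seq take i s :: ws | i <- iota 0 (size s).+1, ws <- splits n (drop i s)] by [].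
have -> : iota 0 (size s).+1 = index_iota 0 (size s).+1 by rewrite /index_iota subn0.
rewrite big_allpairs_dep big_mkord.
apply: eq_bigr => i _; rewrite big_distrr; apply: eq_bigr => ws _; exact: big_cons.
Qed.

Lemma dcnt_le_cnt k N r s : k <= N -> dcnt k r s <= cnt N r s.
Proof.
elim: r k s => [c|r1 IH1 r2 IH2|r1 IH1 r2 IH2|r1 IH1] k s le_kN //=.
- by apply: catcnt_mono => w; [apply: IH1 | apply: IH2].
- by apply: leq_add; [apply: IH1 | apply: IH2].
have star_le j w : j <= N -> star_cnt (dcnt ^~ r1) j w <= \sum_(n < j.+1) splits_cnt (cnt N r1) n w.
  elim: j w => [//|j IHj] w le_jN /=.
  rewrite big_ord_recl splits_cnt0 leq_add2l.
  under eq_bigr do rewrite splits_cntS; rewrite -catcnt_sumr.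
  by apply: catcnt_mono => v; [apply: IH1 | apply: IHj; apply: ltnW].
apply: leq_trans (star_le k s le_kN) _.
rewrite -!(big_mkord xpredT (fun n => splits_cnt (cnt N r1) n s)).
by rewrite [X in _ <= X](big_cat_nat _ (n := k.+1)) //= leq_addr.
Qed.

Lemma cnt_le_dcnt N r : exists K, forall s, cnt N r s <= dcnt K r s.
Proof.
elim: r => [c|r1 [K1 IH1] r2 [K2 IH2]|r1 [K1 IH1] r2 [K2 IH2]|r1 [K1 IH1]].
- by exists 0.
- exists (maxn K1 K2) => s; apply: catcnt_mono => w.
    exact: leq_trans (IH1 w) (dcnt_mono _ _ (leq_maxl _ _)).
  exact: leq_trans (IH2 w) (dcnt_mono _ _ (leq_maxr _ _)).
- exists (maxn K1 K2) => s; apply: leq_add.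
    exact: leq_trans (IH1 s) (dcnt_mono _ _ (leq_maxl _ _)).
  exact: leq_trans (IH2 s) (dcnt_mono _ _ (leq_maxr _ _)).
have star_ge j s : \sum_(n < j) splits_cnt (cnt N r1) n s <= star_cnt (dcnt ^~ r1) (K1 + j) s.
  elim: j s => [|j IHj] s; first by rewrite big_ord0.
  rewrite big_ord_recl splits_cnt0 addnS /= leq_add2l.
  under eq_bigr do rewrite splits_cntS; rewrite -catcnt_sumr.
  apply: catcnt_mono => w; last exact: IHj.
  by apply: leq_trans (IH1 w) (dcnt_mono _ _ _); rewrite -addnS leq_addr.
by exists (K1 + N.+1) => s; apply: star_ge.
Qed.

Lemma dcnt_notinL k r s : ~ inL r s -> dcnt k r s = 0.
Proof.
move=> notinL; apply/eqP; rewrite -leqn0 leqNgt; apply/negP => dcnt_gt0.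
by apply: notinL; exists k; apply: leq_trans dcnt_gt0 (dcnt_le_cnt r s (leqnn k)).
Qed.

Section Unambiguous.

Variable r : regex Sigma.
Hypothesis r_unambiguous : unambiguous r.

Lemma dcnt_le1 k s : dcnt k r s <= 1.
Proof. exact: leq_trans (dcnt_le_cnt r s (leqnn k)) (r_unambiguous k s). Qed.

Lemma dcnt_inL s : inL r s -> exists K, forall k, K <= k -> dcnt k r s = 1.
Proof.
case=> N cnt_gt0; have [K cnt_le] := cnt_le_dcnt N r; exists K => k le_Kk.
apply/eqP; rewrite eqn_leq dcnt_le1.
exact: leq_trans cnt_gt0 (leq_trans (cnt_le s) (dcnt_mono _ _ le_Kk)).
Qed.

End Unambiguous.

End Counting.

Section WeightedSums.

Variable Sigma : finType.
Implicit Types (s w : seq Sigma) (g : seq Sigma -> nat) (f : seq Sigma -> R).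

Lemma wordsS n : words Sigma n.+1 = [seq c :: w | c <- enum Sigma, w <- words Sigma n].
Proof. by []. Qed.

Lemma size_words n s : s \in words Sigma n -> size s = n.
Proof.
elim: n s => [|n IH] s; first by rewrite inE => /eqP ->.
by rewrite wordsS => /allpairsP [[c w] [/= _ /IH <- ->]].
Qed.

Lemma words_size s : s \in words Sigma (size s).
Proof.
elim: s => [|c s IH]; first by rewrite inE.
by rewrite [size _]/= wordsS; apply: allpairs_f => //; rewrite mem_enum.
Qed.

Lemma words_uniq n : uniq (words Sigma n).
Proof.
elim: n => [//|n IH]; rewrite wordsS allpairs_uniq ?enum_uniq //.
by move=> [c w] [c' w'] _ _ /= [-> ->].
Qed.

Lemma big_words_cat a b (F : seq Sigma -> R) :
  \big[Rplus/0]_(s <- words Sigma (a + b)) F s =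
  \big[Rplus/0]_(s1 <- words Sigma a) \big[Rplus/0]_(s2 <- words Sigma b) F (s1 ++ s2).
Proof.
elim: a F => [|a IH] F; first by rewrite add0n big_cons big_nil Rplus_0_r.
rewrite addSn !wordsS !big_allpairs_dep; apply: eq_bigr => c _; exact: IH.
Qed.

Definition wsum g (L : nat) f : R :=
  \big[Rplus/0]_(0 <= n < L) \big[Rplus/0]_(s <- words Sigma n) (INR (g s) * f s).

Lemma wsum_le g g' L f f' :
  (forall s, (size s < L)%nat -> INR (g s) * f s <= INR (g' s) * f' s) ->
  wsum g L f <= wsum g' L f'.
Proof.
move=> le_gf; rewrite /wsum big_nat [X in _ <= X]big_nat.
apply: sumR_le => n /andP [_ lt_nL]; apply: sumR_le_seq => s /size_words size_s.
by apply: le_gf; rewrite size_s.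
Qed.

Lemma wsum_ge0 g L f : (forall s, 0 <= f s) -> 0 <= wsum g L f.
Proof.
move=> f_ge0; do 2![apply: sumR_ge0 => ? _]; apply: Rmult_le_pos => //; exact: pos_INR.
Qed.

Lemma wsum_widen g L L' f : (forall s, 0 <= f s) -> (L <= L')%nat ->
  wsum g L f <= wsum g L' f.
Proof.
move=> f_ge0 le_LL'; apply: sumR_nat_widen => // n; apply: sumR_ge0 => s _.
apply: Rmult_le_pos => //; exact: pos_INR.
Qed.

Lemma wsumD g1 g2 L f : wsum (fun s => g1 s + g2 s)%nat L f = wsum g1 L f + wsum g2 L f.
Proof.
rewrite /wsum -big_split; apply: eq_bigr => n _; rewrite -big_split.
by apply: eq_bigr => s _; rewrite plus_INR /=; ring.
Qed.

Lemma wsum_subr g L f c :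
  wsum g L (fun s => f s - c) = wsum g L f - c * wsum g L (fun _ => 1).
Proof.
suff -> : wsum g L f = wsum g L (fun s => f s - c) + c * wsum g L (fun _ => 1) by ring.
rewrite /wsum big_distrr -big_split; apply: eq_bigr => n _ /=.
by rewrite big_distrr -big_split; apply: eq_bigr => s _ /=; ring.
Qed.

Lemma wsum0 L f : wsum (fun _ => 0%nat) L f = 0.
Proof. by rewrite /wsum big1 // => n _; rewrite big1 // => s _; rewrite Rmult_0_l. Qed.

Lemma wsum_pred1 w L f :
  wsum (fun s => s == w) L f = if (size w < L)%nat then f w else 0.
Proof.
rewrite /wsum (eq_bigr (fun n => if n == size w then f w else 0)) => [|n _].
  elim: L => [|L IH]; first by rewrite big_geq.
  by rewrite big_nat_recr //= IH ltnS; case: ltngtP => _; rewrite /= ?eqxx; ring.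
case: eqP => [-> | ne_size].
  by rewrite (bigD1_seq w) ?words_size ?words_uniq //= eqxx big1 => [|s /negbTE -> /=]; rewrite /=; ring.
rewrite big1_seq // => s /andP [_ /size_words size_s].
have /negbTE -> /= : s != w by apply/eqP => eq_sw; apply: ne_size; rewrite -size_s eq_sw.
ring.
Qed.

Lemma wsum_term g L f s : (forall s, 0 <= f s) -> (size s < L)%nat ->
  INR (g s) * f s <= wsum g L f.
Proof.
move=> f_ge0 lt_sL; have gf_ge0 w : 0 <= INR (g w) * f w.
  by apply: Rmult_le_pos => //; apply: pos_INR.
apply: Rle_trans (sumR_term (words_size s) gf_ge0) _.
apply: (sumR_term (F := fun n => \big[Rplus/0]_(w <- words Sigma n) (INR (g w) * f w))).
  by rewrite mem_index_iota.
by move=> n; apply: sumR_ge0.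
Qed.

Lemma sum_antidiagonal (a : nat -> nat -> R) L :
  \big[Rplus/0]_(0 <= n < L) \big[Rplus/0]_(0 <= i < n.+1) a i (n - i)%nat =
  \big[Rplus/0]_(0 <= i < L) \big[Rplus/0]_(0 <= j < L - i) a i j.
Proof.
elim: L => [|L IH]; first by rewrite !big_geq.
rewrite big_nat_recr //= IH [RHS](@eq_big_nat _ _ _ 0 L.+1 _
  (fun i => \big[Rplus/0]_(0 <= j < L - i) a i j + a i (L - i)%nat)) => [|i /andP [_ lt_iL]].
  rewrite big_split /= [X in _ = X + _]big_nat_recr //= subnn (@big_geq _ _ _ 0 0) //.
  by rewrite Rplus_0_r.
by rewrite subSn // big_nat_recr.
Qed.

Definition pair_sum g1 g2 f (i j : nat) : R :=
  \big[Rplus/0]_(s1 <- words Sigma i) \big[Rplus/0]_(s2 <- words Sigma j)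
     (INR (g1 s1) * INR (g2 s2) * f (s1 ++ s2)).

Lemma wsum_catcnt g1 g2 L f :
  wsum (catcnt g1 g2) L f =
  \big[Rplus/0]_(0 <= i < L) \big[Rplus/0]_(0 <= j < L - i) pair_sum g1 g2 f i j.
Proof.
rewrite /wsum -sum_antidiagonal; apply: eq_bigr => n _.
rewrite (eq_big_seq (fun s => \big[Rplus/0]_(i < n.+1)
    (INR (g1 (take i s)) * INR (g2 (drop i s)) * f s))) => [|s /size_words size_s]; last first.
  rewrite /catcnt INR_sum big_distrl size_s.
  by apply: eq_bigr => i _; rewrite mult_INR.
rewrite exchange_big [RHS]big_mkord; apply: eq_bigr => i _.
have le_in : (i <= n)%nat by rewrite -ltnS.
rewrite -{1}(subnKC le_in) big_words_cat; apply: eq_big_seq => s1 /size_words size_s1.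
by apply: eq_bigr => s2 _; rewrite take_size_cat ?drop_size_cat.
Qed.

Lemma wsum_nested g1 g2 L1 L2 f :
  wsum g1 L1 (fun s1 => wsum g2 L2 (fun s2 => f (s1 ++ s2))) =
  \big[Rplus/0]_(0 <= i < L1) \big[Rplus/0]_(0 <= j < L2) pair_sum g1 g2 f i j.
Proof.
rewrite /wsum; apply: eq_bigr => i _; rewrite /pair_sum exchange_big /=.
apply: eq_bigr => s1 _; rewrite big_distrr; apply: eq_bigr => j _ /=.
by rewrite big_distrr; apply: eq_bigr => s2 _ /=; ring.
Qed.

Lemma pair_sum_ge0 g1 g2 f i j : (forall s, 0 <= f s) -> 0 <= pair_sum g1 g2 f i j.
Proof.
move=> f_ge0; do 2![apply: sumR_ge0 => ? _].
by apply: Rmult_le_pos => //; apply: Rmult_le_pos; apply: pos_INR.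
Qed.

Lemma wsum_catcnt_le g1 g2 L f : (forall s, 0 <= f s) ->
  wsum (catcnt g1 g2) L f <= wsum g1 L (fun s1 => wsum g2 L (fun s2 => f (s1 ++ s2))).
Proof.
move=> f_ge0; rewrite wsum_catcnt wsum_nested; apply: sumR_le => i _.
by apply: sumR_nat_widen; [apply: leq_subr | move=> j; apply: pair_sum_ge0].
Qed.

Lemma wsum_catcnt_ge g1 g2 L1 L2 f : (forall s, 0 <= f s) ->
  wsum g1 L1 (fun s1 => wsum g2 L2 (fun s2 => f (s1 ++ s2))) <=
  wsum (catcnt g1 g2) (L1 + L2) f.
Proof.
move=> f_ge0; rewrite wsum_catcnt wsum_nested.
apply: (Rle_trans _ (\big[Rplus/0]_(0 <= i < L1)
  \big[Rplus/0]_(0 <= j < L1 + L2 - i) pair_sum g1 g2 f i j)).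
  rewrite big_nat [X in _ <= X]big_nat; apply: sumR_le => i /andP [_ lt_iL1].
  apply: sumR_nat_widen; last by move=> j; apply: pair_sum_ge0.
  rewrite leq_subRL; first by rewrite leq_add2r ltnW.
  exact: leq_trans (ltnW lt_iL1) (leq_addr _ _).
apply: sumR_nat_widen; first exact: leq_addr.
by move=> i; apply: sumR_ge0 => j _; apply: pair_sum_ge0.
Qed.

End WeightedSums.

Section Approximation.

Variable Sigma : finType.
Implicit Types (F : nat -> seq Sigma -> nat) (f : seq Sigma -> R) (T : R).

Definition counts_mono F : Prop := forall n s, (F n s <= F n.+1 s)%nat.

Definition approx_below T F f : Prop :=
  forall eps, 0 < eps -> exists n, T - eps <= wsum (F n) n f.

Lemma counts_mono_le F m n s : counts_mono F -> (m <= n)%nat -> (F m s <= F n s)%nat.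
Proof.
move=> mono; move: m n; apply: (homo_leq (f := F ^~ s) (r := leq)) => //.
exact: leq_trans.
Qed.

Lemma wsum_counts_mono F f m n : counts_mono F -> (forall s, 0 <= f s) -> (m <= n)%nat ->
  wsum (F m) m f <= wsum (F n) n f.
Proof.
move=> mono f_ge0 le_mn; apply: Rle_trans (wsum_widen _ f_ge0 le_mn) _.
apply: wsum_le => s _; apply: Rmult_le_compat_r => //; apply: le_INR.
by apply/leP; apply: counts_mono_le.
Qed.

Lemma approx_below_shift T F f : counts_mono F -> (forall s, 0 <= f s) ->
  approx_below T F f <-> approx_below T (fun n => F n.+1) f.
Proof.
move=> mono f_ge0; split=> approx eps /approx [n le_n].
  exists n; apply: Rle_trans le_n _; apply: wsum_le => s _.
  by apply: Rmult_le_compat_r => //; apply: le_INR; apply/leP.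
exists n.+1; apply: Rle_trans le_n (wsum_widen _ f_ge0 (leqnSn n)).
Qed.

Lemma approx_below_add T1 T2 F1 F2 f :
  counts_mono F1 -> counts_mono F2 -> (forall s, 0 <= f s) ->
  approx_below T1 F1 f -> approx_below T2 F2 f ->
  approx_below (T1 + T2) (fun n s => F1 n s + F2 n s)%nat f.
Proof.
move=> mono1 mono2 f_ge0 approx1 approx2 eps eps_gt0.
have [n1 le1] := approx1 (eps / 2) ltac:(lra).
have [n2 le2] := approx2 (eps / 2) ltac:(lra).
exists (maxn n1 n2); rewrite wsumD.
have := wsum_counts_mono mono1 f_ge0 (leq_maxl n1 n2).
have := wsum_counts_mono mono2 f_ge0 (leq_maxr n1 n2).
lra.
Qed.

Lemma approx_below_lim (T : nat -> R) l F f :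
  (forall N, approx_below (T N) F f) -> Un_cv T l -> approx_below l F f.
Proof.
move=> approx cvT eps eps_gt0; have [N /(_ N (le_n N))] := cvT (eps / 2) ltac:(lra).
rewrite /R_dist => /Rabs_def2 [_ lt_TN].
have [n le_n] := approx N (eps / 2) ltac:(lra).
by exists n; lra.
Qed.

Lemma approx_below_pred1 w f : approx_below (f w) (fun _ s => s == w) f.
Proof.
move=> eps eps_gt0; exists (size w).+1; rewrite wsum_pred1 ltnSn; lra.
Qed.

Lemma exists_uniform_seq (I : eqType) (t : seq I) (P : I -> nat -> Prop) :
  (forall i m n, (m <= n)%nat -> P i m -> P i n) ->
  (forall i, i \in t -> exists n, P i n) -> exists n, forall i, i \in t -> P i n.
Proof.
move=> mono; elim: t => [|i t IH] ex_n; first by exists 0%nat.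
have [n1 P1] := ex_n i (mem_head i t).
have [n2 P2] : exists n, forall j, j \in t -> P j n.
  by apply: IH => j jt; apply: ex_n; rewrite inE jt orbT.
exists (maxn n1 n2) => j; rewrite inE => /predU1P [-> | jt].
  exact: mono (leq_maxl n1 n2) P1.
exact: mono (leq_maxr n1 n2) (P2 j jt).
Qed.

Lemma exists_uniform_short (P : seq Sigma -> nat -> Prop) L :
  (forall s m n, (m <= n)%nat -> P s m -> P s n) ->
  (forall s, (size s < L)%nat -> exists n, P s n) ->
  exists n, forall s, (size s < L)%nat -> P s n.
Proof.
pose short := flatten [seq words Sigma i | i <- iota 0 L].
have shortP s : (size s < L)%nat = (s \in short).
  apply/idP/flatten_mapP => [lt_sL | [i]].
    by exists (size s); rewrite ?mem_iota ?words_size.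
  by rewrite mem_iota => /andP [_ lt_iL] /size_words ->.
move=> mono ex_n; have [n Pn] : exists n, forall s, s \in short -> P s n.
  by apply: exists_uniform_seq => // s; rewrite -shortP; apply: ex_n.
by exists n => s; rewrite shortP; apply: Pn.
Qed.

End Approximation.

Section TruncatedSums.

Variables (Sigma : finType) (D : nat) (A : Sigma -> mat D).
Implicit Types (r : regex Sigma) (Q X : mat D) (v : vec D) (g : seq Sigma -> nat).

Lemma wsum_word_weight_cat g L v Q s1 :
  wsum g L (fun s2 => word_weight A v Q (s1 ++ s2)) =
  wsum g L (word_weight A (vmul v (mps_word A s1)) Q).
Proof. by congr wsum; apply: functional_extensionality => s2; apply: word_weight_cat. Qed.

Lemma wsum_catcnt_weight_le g1 g2 L v X Q T : psd Q ->
  (forall v', wsum g2 L (word_weight A v' Q) <= qform v' X) ->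
  wsum g1 L (word_weight A v X) <= T ->
  wsum (catcnt g1 g2) L (word_weight A v Q) <= T.
Proof.
move=> Qpsd le2 le1.
apply: Rle_trans (wsum_catcnt_le _ _ _ (f := word_weight A v Q) (fun s => Qpsd _)) _.
apply: Rle_trans le1; apply: wsum_le => s1 _; apply: Rmult_le_compat_l; first exact: pos_INR.
by rewrite wsum_word_weight_cat; apply: le2.
Qed.

Lemma wsum_dcnt_le r k L v Q : Er_conv A r -> psd Q ->
  wsum (dcnt k r) L (word_weight A v Q) <= qform v (Er A r Q).
Proof.
elim: r k v Q => [c|r1 IH1 r2 IH2|r1 IH1 r2 IH2|r1 IH1] k v Q conv Qpsd.
- rewrite wsum_pred1 -word_weight_chr; case: ifP => _; [exact: Rle_refl | exact: Qpsd].
- move: conv => /= [cv1 cv2].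
  apply: (wsum_catcnt_weight_le Qpsd _ (IH1 _ _ _ cv1 (Er_psd cv2 Qpsd))) => v'.
  exact: IH2.
- move: conv => /= [cv1 cv2]; rewrite [dcnt _ _]/= wsumD [Er _ _ _]/= qformD.
  by have := IH1 k v Q cv1 Qpsd; have := IH2 k v Q cv2 Qpsd; lra.
- elim: k v => [|k IHk] v; first by rewrite wsum0; apply: Er_psd.
  rewrite [dcnt _ _]/= wsumD wsum_pred1 (Er_star_fix Q conv) qformD word_weight_nil.
  apply: Rplus_le_compat; first by case: ifP => _; [exact: Rle_refl | exact: Qpsd].
  exact: (wsum_catcnt_weight_le Qpsd IHk (IH1 _ _ _ (proj1 conv) (Er_psd conv Qpsd))).
Qed.

Lemma dcnt_weight_le r k v Q s : Er_conv A r -> psd Q ->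
  INR (dcnt k r s) * word_weight A v Q s <= qform v (Er A r Q).
Proof.
move=> conv Qpsd; apply: Rle_trans (wsum_dcnt_le k (size s).+1 v conv Qpsd).
exact: wsum_term (fun w => Qpsd _) (ltnSn _).
Qed.

Lemma dcnt_weight_eq0 r k v Q s : Er_conv A r -> psd Q -> qform v (Er A r Q) = 0 ->
  INR (dcnt k r s) * word_weight A v Q s = 0.
Proof.
move=> conv Qpsd Z0; apply: Rle_antisym; first by rewrite -Z0; apply: dcnt_weight_le.
by apply: Rmult_le_pos; [apply: pos_INR | apply: Qpsd].
Qed.

End TruncatedSums.

Section Sampling.

Variables (Sigma : finType) (D : nat) (A : Sigma -> mat D).
Implicit Types (r : regex Sigma) (Q X : mat D) (v : vec D).

Section SampUnfold.

Variables (k : nat) (Ql Qr : mat D) (s : seq Sigma).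

Lemma samp_chr c : samp A k (Chr c) Ql Qr s = if s == [:: c] then 1 else 0.
Proof. by case: k. Qed.

Lemma samp_cat r1 r2 : samp A k (Cat r1 r2) Ql Qr s =
  \big[Rplus/0]_(i < (size s).+1) (samp A k r1 Ql (Er A r2 Qr) (take i s) *
     samp A k r2 (El_word A (take i s) Ql) Qr (drop i s)).
Proof. by case: k. Qed.

Lemma samp_alt r1 r2 : samp A k (Alt r1 r2) Ql Qr s =
  ZR A r1 Ql Qr / ZR A (Alt r1 r2) Ql Qr * samp A k r1 Ql Qr s +
  ZR A r2 Ql Qr / ZR A (Alt r1 r2) Ql Qr * samp A k r2 Ql Qr s.
Proof. by case: k. Qed.

End SampUnfold.

Lemma samp_starS k r Ql Qr s : samp A k.+1 (Star r) Ql Qr s =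
  trace (mmul Ql Qr) / ZR A (Star r) Ql Qr * (if s is [::] then 1 else 0) +
  (1 - trace (mmul Ql Qr) / ZR A (Star r) Ql Qr) *
  \big[Rplus/0]_(i < (size s).+1) (samp A k.+1 r Ql (Er A (Star r) Qr) (take i s) *
     samp A k (Star r) (El_word A (take i s) Ql) Qr (drop i s)).
Proof. by []. Qed.

Lemma samp_catcnt k1 k2 r1 r2 X Q v s :
  (forall v s, qform v (Er A r1 X) * samp A k1 r1 (outer v) X s =
               INR (dcnt k1 r1 s) * word_weight A v X s) ->
  (forall v s, qform v X * samp A k2 r2 (outer v) Q s =
               INR (dcnt k2 r2 s) * word_weight A v Q s) ->
  qform v (Er A r1 X) * \big[Rplus/0]_(i < (size s).+1)
     (samp A k1 r1 (outer v) X (take i s) *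
      samp A k2 r2 (El_word A (take i s) (outer v)) Q (drop i s)) =
  INR (catcnt (dcnt k1 r1) (dcnt k2 r2) s) * word_weight A v Q s.
Proof.
move=> inv1 inv2; rewrite /catcnt INR_sum big_distrr big_distrl; apply: eq_bigr => i _ /=.
rewrite -Rmult_assoc inv1 El_word_outer mult_INR.
have -> : word_weight A v Q s = word_weight A (vmul v (mps_word A (take i s))) Q (drop i s).
  by rewrite -word_weight_cat cat_take_drop.
by rewrite Rmult_assoc [word_weight _ _ _ _ * _]inv2 Rmult_assoc.
Qed.

Lemma samp_dcnt r k v Q s : Er_conv A r -> psd Q ->
  qform v (Er A r Q) * samp A k r (outer v) Q s = INR (dcnt k r s) * word_weight A v Q s.
Proof.
elim: r k v Q s => [c|r1 IH1 r2 IH2|r1 IH1 r2 IH2|r1 IH1] k v Q s conv Qpsd.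
- by rewrite samp_chr [dcnt _ _ _]/=; case: eqP => [->|_]; rewrite ?word_weight_chr /=; ring.
- rewrite samp_cat; move: conv => /= [cv1 cv2].
  apply: samp_catcnt => v' s'; first exact: IH1 _ _ _ _ cv1 (Er_psd cv2 Qpsd).
  exact: IH2.
- have [cv1 cv2] : Er_conv A r1 /\ Er_conv A r2 := conv.
  rewrite samp_alt /ZR !trace_mmul_outer.
  have [Z0|Zn0] := Req_dec (qform v (Er A (Alt r1 r2) Q)) 0.
    by rewrite Z0 Rmult_0_l; symmetry; apply: dcnt_weight_eq0.
  rewrite [dcnt _ _ _]/= plus_INR Rmult_plus_distr_r -(IH1 k v Q s cv1 Qpsd) -(IH2 k v Q s cv2 Qpsd).
  move: Zn0; rewrite [Er _ _ _]/= qformD => Zn0; field; exact: Zn0.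
have cv1 : Er_conv A r1 := proj1 conv.
elim: k v s => [|k IHk] v s; first by rewrite /=; ring.
rewrite samp_starS /ZR !trace_mmul_outer.
have [Z0|Zn0] := Req_dec (qform v (Er A (Star r1) Q)) 0.
  by rewrite Z0 Rmult_0_l; symmetry; apply: dcnt_weight_eq0.
have Zsplit : qform v (Er A (Star r1) Q) = qform v Q + qform v (Er A r1 (Er A (Star r1) Q)).
  by rewrite {1}(Er_star_fix Q conv) qformD.
have IH1' v' s' := IH1 k.+1 v' _ s' cv1 (Er_psd conv Qpsd).
rewrite [dcnt _ _ _]/= plus_INR Rmult_plus_distr_r -(samp_catcnt _ _ IH1' IHk).
have -> : INR (s == [::]) * word_weight A v Q s = qform v Q * (if s is [::] then 1 else 0).
  by case: s => [|c s]; rewrite /= ?word_weight_nil; ring.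
by move: Zn0; rewrite Zsplit => Zn0; field.
Qed.

End Sampling.

Section SupremumOfTruncations.

Variables (Sigma : finType) (D : nat) (A : Sigma -> mat D).
Implicit Types (r : regex Sigma) (Q X : mat D) (v : vec D) (F : nat -> seq Sigma -> nat).

Lemma approx_below_cat F1 F2 v X Q T : counts_mono F1 -> counts_mono F2 -> psd Q ->
  (forall v', approx_below (qform v' X) F2 (word_weight A v' Q)) ->
  approx_below T F1 (word_weight A v X) ->
  approx_below T (fun n => catcnt (F1 n) (F2 n)) (word_weight A v Q).
Proof.
move=> mono1 mono2 Qpsd approx2 approx1 eps eps_gt0.
have [n1 le1] := approx1 (eps / 2) ltac:(lra).
have [d d_gt0 small_d] := exists_small_factor
  (@wsum_ge0 _ (F1 n1) n1 (fun _ => 1) (fun _ => Rle_0_1)) (ltac:(lra) : 0 < eps / 2).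
pose P s1 n := qform (vmul v (mps_word A s1)) X - d <=
  wsum (F2 n) n (word_weight A (vmul v (mps_word A s1)) Q).
have [n2 le2] : exists n2, forall s1, (size s1 < n1)%nat -> P s1 n2.
  apply: exists_uniform_short => [s1 m n le_mn|s1 _]; last exact: approx2.
  rewrite /P => le_m; apply: Rle_trans le_m _.
  exact: wsum_counts_mono mono2 (fun s => Qpsd _) le_mn.
exists (n1 + n2)%nat.
apply: (Rle_trans _ (wsum (F1 n1) n1 (fun s1 => word_weight A v X s1 - d))).
  by rewrite wsum_subr; lra.
apply: (Rle_trans _ (wsum (catcnt (F1 n1) (F2 n2)) (n1 + n2) (word_weight A v Q))).
  apply: Rle_trans (wsum_catcnt_ge _ _ _ _ (fun s => Qpsd _)).
  apply: wsum_le => s1 /le2 le_s1; apply: Rmult_le_compat_l; first exact: pos_INR.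
  by rewrite wsum_word_weight_cat.
apply: wsum_le => s _; apply: Rmult_le_compat_r; first exact: Qpsd.
apply: le_INR; apply/leP; apply: catcnt_mono => w; apply: counts_mono_le => //.
  exact: leq_addr.
exact: leq_addl.
Qed.

Lemma dcnt_counts_mono r : counts_mono (fun n => dcnt n r).
Proof. by move=> n s; apply: dcnt_mono1. Qed.

Lemma approx_below_star_sum r Q : Er_conv A r -> psd Q ->
  (forall v P, psd P -> approx_below (qform v (Er A r P)) (fun n => dcnt n r) (word_weight A v P)) ->
  forall N v, approx_below (qform v (star_sum (Er A r) Q N)) (fun n => dcnt n (Star r))
    (word_weight A v Q).
Proof.
move=> conv Qpsd approx_r; elim=> [|N IHN] v.
  move=> eps eps_gt0; exists 1%nat; have -> : star_sum (Er A r) Q 0 = Q by [].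
  apply: Rle_trans (@wsum_term _ _ 1 _ [::] (fun s => Qpsd _) (ltnSn 0)).
  rewrite [mps_word _ _]/= vmul1 [dcnt _ _ _]/= plus_INR [INR 1]/=.
  by move: (catcnt _ _ _) => c; have := pos_INR c; have := Qpsd v; nra.
have psdN : psd (star_sum (Er A r) Q N) by apply: psd_star_sum => // P /(Er_psd conv).
have outer := (approx_below_shift _ (dcnt_counts_mono r) (fun s => psdN _)).1 (approx_r v _ psdN).
have cat := approx_below_cat (fun n s => dcnt_mono1 n.+1 r s) (dcnt_counts_mono (Star r))
  Qpsd IHN outer.
have nil : approx_below (word_weight A v Q [::]) (fun _ s => s == [::]) (word_weight A v Q).
  exact: approx_below_pred1.
rewrite star_sumS ?qformD -?(word_weight_nil A v Q); last exact: Er_linear.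
apply/approx_below_shift; [exact: dcnt_counts_mono | by move=> s; apply: Qpsd |].
exact: (@approx_below_add _ _ _ (fun _ s => s == [::])
  (fun n => catcnt (dcnt n.+1 r) (dcnt n (Star r))) _ (fun _ _ => leqnn _)
  (fun n s => catcnt_mono s (fun w => dcnt_mono1 n.+1 r w) (fun w => dcnt_mono1 n (Star r) w))
  (fun s => Qpsd _) nil cat).
Qed.

Lemma approx_below_Er r v Q : Er_conv A r -> psd Q ->
  approx_below (qform v (Er A r Q)) (fun n => dcnt n r) (word_weight A v Q).
Proof.
elim: r v Q => [c|r1 IH1 r2 IH2|r1 IH1 r2 IH2|r1 IH1] v Q conv Qpsd.
- by rewrite -word_weight_chr; apply: approx_below_pred1.
- have [cv1 cv2] : Er_conv A r1 /\ Er_conv A r2 := conv.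
  apply: (approx_below_cat (dcnt_counts_mono r1) (dcnt_counts_mono r2) Qpsd) => [v'|].
    exact: IH2.
  exact: IH1 (Er_psd cv2 Qpsd).
- have [cv1 cv2] : Er_conv A r1 /\ Er_conv A r2 := conv.
  rewrite [Er _ _ _]/= qformD.
  exact: approx_below_add (dcnt_counts_mono r1) (dcnt_counts_mono r2) (fun s => Qpsd _)
    (IH1 _ _ cv1 Qpsd) (IH2 _ _ cv2 Qpsd).
apply: (approx_below_lim _ (qform_cv v (fun i j => Er_star_cv Q i j conv))) => N.
apply: (approx_below_star_sum (proj1 conv) Qpsd) => v' P Ppsd.
exact: IH1 (proj1 conv) Ppsd.
Qed.

End SupremumOfTruncations.

Section LanguageMass.

Variable Sigma : finType.
Implicit Types (P : seq Sigma -> Prop) (f : seq Sigma -> R).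

Lemma len_mass_ge0 P f n : (forall s, 0 <= f s) -> 0 <= len_mass P f n.
Proof.
move=> f_ge0; apply: sumR_ge0 => s _.
by case: (excluded_middle_informative (P s)) => ? /=; [apply: f_ge0 | apply: Rle_refl].
Qed.

Lemma len_mass_div P f c n : c <> 0 -> len_mass P (fun s => f s / c) n * c = len_mass P f n.
Proof.
move=> c_neq0; rewrite /len_mass big_distrl; apply: eq_bigr => s _ /=.
by case: (excluded_middle_informative (P s)) => ? /=; [field | ring].
Qed.

Lemma len_mass_wsum P f L :
  \big[Rplus/0]_(0 <= n < L) len_mass P f n =
  wsum (fun s => if excluded_middle_informative (P s) then 1 else 0)%nat L f.
Proof.
apply: eq_bigr => n _; apply: eq_bigr => s _.
by case: (excluded_middle_informative (P s)) => ? /=; ring.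
Qed.

End LanguageMass.

Lemma Er_language_sum (Sigma : finType) (D : nat) (A : Sigma -> mat D) r v Q :
  unambiguous r -> Er_conv A r -> psd Q ->
  infinite_sum (len_mass (inL r) (word_weight A v Q)) (qform v (Er A r Q)).
Proof.
move=> unamb conv Qpsd; set f := word_weight A v Q.
pose ind s := if excluded_middle_informative (inL r s) then 1%nat else 0%nat.
have partial N : sum_f_R0 (len_mass (inL r) f) N = wsum ind N.+1 f.
  by rewrite sum_f_R0_big len_mass_wsum.
have le_ind k L : wsum (dcnt k r) L f <= wsum ind L f.
  apply: wsum_le => s _; apply: Rmult_le_compat_r; first exact: Qpsd.
  apply: le_INR; apply/leP; rewrite /ind.
  by case: (excluded_middle_informative (inL r s)) => [_|/(dcnt_notinL k) ->] /=; rewrite ?dcnt_le1.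
have ge_ind L : exists k, wsum ind L f <= wsum (dcnt k r) L f.
  have [k dcnt_gt0] : exists k, forall s, (size s < L)%nat -> inL r s -> (0 < dcnt k r s)%nat.
    apply: exists_uniform_short => [s m n le_mn gt0 /gt0|s _].
      by move/leq_trans; apply; apply: dcnt_mono.
    case: (classic (inL r s)) => [inLs|notinL]; last by exists 0%nat => /notinL.
    by have [K dcnt1] := dcnt_inL unamb inLs; exists K => _; rewrite dcnt1.
  exists k; apply: wsum_le => s lt_sL; apply: Rmult_le_compat_r; first exact: Qpsd.
  apply: le_INR; apply/leP; rewrite /ind.
  by case: (excluded_middle_informative (inL r s)) => [inLs|?] /=; first exact: dcnt_gt0.
apply: growing_Un_cv_sup.
- by move=> n /=; have := @len_mass_ge0 _ (inL r) f n.+1 (fun s => Qpsd _); lra.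
- move=> N; rewrite partial; have [k le_k] := ge_ind N.+1.
  exact: Rle_trans le_k (wsum_dcnt_le _ _ _ conv Qpsd).
move=> eps /(approx_below_Er v conv Qpsd) [n le_n]; exists n; rewrite partial.
exact: Rle_trans le_n (Rle_trans _ _ _ (le_ind n n) (wsum_widen _ (fun s => Qpsd _) (leqnSn n))).
Qed.

Theorem theorem1 (Sigma : finType) (D : nat) (A : Sigma -> mat D) (alpha omega : vec D)
  (Zs : R) (r : regex Sigma) (PR : R) :
  infinite_sum (len_mass (fun _ => True) (fun s => (amp A alpha omega s ^ 2)%R)) Zs ->
  (0 < Zs)%R ->
  unambiguous r ->
  Er_conv A r ->
  infinite_sum (len_mass (inL r) (fun s => (amp A alpha omega s ^ 2 / Zs)%R)) PR ->
  (0 < PR)%R ->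
  forall s : seq Sigma,
    Un_cv (fun k => samp A k r (outer alpha) (outer omega) s)
      (if excluded_middle_informative (inL r s)
       then (amp A alpha omega s ^ 2 / Zs / PR)%R else 0%R).
Proof.
(* That Zs is the total mass is irrelevant: only 0 < Zs enters, through PR. *)
move=> _ Zs_gt0 unamb conv massPR PR_gt0 s.
have omega_psd := psd_outer omega.
have Z_eq : qform alpha (Er A r (outer omega)) = Zs * PR.
  apply: uniqueness_sum (Er_language_sum alpha unamb conv omega_psd) _.
  rewrite (functional_extensionality _ _ (word_weight_outer A alpha omega)).
  rewrite Rmult_comm; move: (CV_mult _ _ _ _ massPR (Un_cv_const Zs)).
  apply: Un_cv_ext => n.
  by rewrite [_ * Zs]Rmult_comm scal_sum; apply: sum_eq => i _; apply: len_mass_div; lra.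
have samp_eq k : samp A k r (outer alpha) (outer omega) s =
                 INR (dcnt k r s) * (amp A alpha omega s ^ 2 / Zs / PR).
  apply: (Rmult_eq_reg_l (Zs * PR)); last by apply: Rgt_not_eq; apply: Rmult_lt_0_compat.
  rewrite -Z_eq samp_dcnt // word_weight_outer Z_eq; field; lra.
apply: Un_cv_eventually; case: (excluded_middle_informative (inL r s)) => [inLs|notinLs] /=.
  have [K dcnt1] := dcnt_inL unamb inLs.
  by exists K => k le_Kk; rewrite samp_eq dcnt1 //= Rmult_1_l.
by exists 0%nat => k _; rewrite samp_eq dcnt_notinL //= Rmult_0_l.
Qed.
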